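(* For every $n\ge 2$, the real projective space $\mathbb RP^n(1)$ of constant sectional curvature $1$ admits no ideal embedding (no ideal immersion) into any Euclidean space $\mathbb E^m$, regardless of codimension.
   Context: For a Riemannian $n$-manifold $M$: the scalar curvature at $p$ is $\tau(p)=\sum_{i<j}K(e_i\wedge e_j)$ for an orthonormal basis of $T_pM$; for a subspace $L\subset T_pM$ of dimension $r\ge2$, $\tau(L)=\sum_{\alpha<\beta}K(e_\alpha\wedge e_\beta)$ over an orthonormal basis of $L$. Let $\mathcal S(n)$ be the set of unordered $k$-tuples $(n_1,\dots,n_k)$, $k\ge1$, of integers $\ge2$ with $n_1<n$ and $\sum n_j\le n$. Define $\delta(n_1,\dots,n_k)(p)=\tau(p)-\inf\{\tau(L_1)+\dots+\tau(L_k)\}$ over mutually orthogonal subspaces $L_j\subset T_pM$ with $\dim L_j=n_j$; $c(n_1,\dots,n_k)=\frac{n^2(n+k-1-\sum n_j)}{2(n+k-\sum n_j)}$; $\hat\Delta_0(M)=\max_{\mathcal S(n)}\delta(n_1,\dots,n_k)/c(n_1,\dots,n_k)$. For an isometric immersion $x:M\to\mathbb E^m$ with mean curvature vector $\vec H=\frac1n\operatorname{trace}h$ ($h$ the second fundamental form) and $H=|\vec H|$, one always has $H^2\ge\hat\Delta_0(M)$; the immersion is called ideal if $H^2=\hat\Delta_0(M)$ identically. *)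

From HB Require Import structures.
From mathcomp Require Import all_boot all_order all_algebra.
From mathcomp Require Import all_classical all_reals all_analysis.
Set Implicit Arguments. Unset Strict Implicit. Unset Printing Implicit Defensive.
Import Order.TTheory GRing.Theory Num.Theory.
Import numFieldNormedType.Exports.
Local Open Scope classical_set_scope.
Local Open Scope ring_scope.

Section Defs.
Variable R : realType.

Definition dotv (k : nat) (u v : 'rV[R]_k) : R := \sum_(i < k) u 0 i * v 0 i.

Definition on_sphere (N : nat) (p : 'rV[R]_N.+1) : Prop := dotv p p = 1.
Definition tangent (N : nat) (p v : 'rV[R]_N.+1) : Prop := dotv p v = 0.

Definition tangent_on_family (N : nat) (p : 'rV[R]_N.+1) (e : nat -> 'rV[R]_N.+1)
  (r : nat) : Prop :=
  (forall a, (a < r)%N -> tangent p (e a)) /\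
  (forall a b, (a < r)%N -> (b < r)%N -> dotv (e a) (e b) = (a == b)%:R).

Fixpoint iter_D (V W : normedModType R) (vs : seq V) (f : V -> W) : V -> W :=
  match vs with
  | [::] => f
  | v :: vs' => 'D_v (iter_D vs' f)
  end.
Definition smooth (V W : normedModType R) (f : V -> W) : Prop :=
  forall (vs : seq V) (x : V), differentiable (iter_D vs f) x.

(** An isometric immersion of RP^n(1) = S^n / {+-1} into E^m, given by its
    lift to S^n (an antipodally invariant isometric immersion of the unit
    sphere), realized as the restriction to S^n of a smooth map on R^(n+1). *)
Definition isometric_immersion_RP (n m : nat) (f : 'rV[R]_n.+1 -> 'rV[R]_m) : Prop :=
  smooth f /\
  (forall p, on_sphere p -> f (- p) = f p) /\
  (forall p u v, on_sphere p -> tangent p u -> tangent p v ->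
     dotv ('D_u f p) ('D_v f p) = dotv u v).

(** Unit-speed great circle (geodesic of S^n(1), hence of RP^n(1)) through p
    with initial velocity v. *)
Definition geod (N : nat) (p v : 'rV[R]_N.+1) (t : R) : 'rV[R]_N.+1 :=
  cos t *: p + sin t *: v.

(** Second fundamental form on the diagonal: h(v,v) = (x o gamma_v)''(0)
    (Gauss formula along a geodesic). *)
Definition sff_diag (n m : nat) (f : 'rV[R]_n.+1 -> 'rV[R]_m) (p v : 'rV[R]_n.+1)
  : 'rV[R]_m :=
  'D_1 ('D_1 (f \o geod p v)) 0.

(** Mean curvature vector H = (1/n) trace h, computed in the orthonormal
    basis e 0, ..., e (n-1) of T_p. *)
Definition mean_curv (n m : nat) (f : 'rV[R]_n.+1 -> 'rV[R]_m) (p : 'rV[R]_n.+1)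
  (e : nat -> 'rV[R]_n.+1) : 'rV[R]_m :=
  n%:R^-1 *: \sum_(0 <= a < n) sff_diag f p (e a).

(** tau of the span of the orthonormal vectors e lo, ..., e (hi-1), for a
    sectional curvature function K (K u v = K(u /\ v) for orthonormal u, v). *)
Definition tau_seg (V : Type) (K : V -> V -> R) (e : nat -> V) (lo hi : nat) : R :=
  \sum_(lo <= a < hi) \sum_(a.+1 <= b < hi) K (e a) (e b).

(** sum of tau(L_j) where L_1, ..., L_k are consecutive blocks of sizes s. *)
Fixpoint tau_blocks (V : Type) (K : V -> V -> R) (e : nat -> V) (lo : nat)
  (s : seq nat) : R :=
  match s with
  | [::] => 0
  | nj :: s' => tau_seg K e lo (lo + nj) + tau_blocks K e (lo + nj) s'
  end.

Definition S_adm (n : nat) (s : seq nat) : bool :=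
  [&& (0 < size s)%N, all (fun x => (2 <= x < n)%N) s & (sumn s <= n)%N].

(** delta(n_1, ..., n_k)(p); the scalar curvature tau(p) is computed in the
    orthonormal basis e of T_p; mutually orthogonal subspaces L_j of T_p with
    dim L_j = n_j are given by orthonormal bases, concatenated in E. *)
Definition delta_inv (N : nat) (K : 'rV[R]_N.+1 -> 'rV[R]_N.+1 -> R)
  (p : 'rV[R]_N.+1) (e : nat -> 'rV[R]_N.+1) (s : seq nat) : R :=
  tau_seg K e 0 N -
  inf [set t | exists E : nat -> 'rV[R]_N.+1,
         tangent_on_family p E (sumn s) /\ t = tau_blocks K E 0 s].

Definition c_const (n : nat) (s : seq nat) : R :=
  (n%:R ^+ 2 * ((n + size s)%:R - 1 - (sumn s)%:R)) /
  (2 * ((n + size s)%:R - (sumn s)%:R)).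

(** hat Delta_0(p) = max over S(n) of delta / c (as a sup of a finite set;
    mathcomp's convention sup set0 = 0 applies when S(n) is empty). *)
Definition DeltaHat0 (N : nat) (K : 'rV[R]_N.+1 -> 'rV[R]_N.+1 -> R)
  (p : 'rV[R]_N.+1) (e : nat -> 'rV[R]_N.+1) : R :=
  sup [set t | exists s, S_adm N s /\ t = delta_inv K p e s / c_const N s].

Definition K_RP1 (N : nat) : 'rV[R]_N.+1 -> 'rV[R]_N.+1 -> R := fun _ _ => 1.

Definition ideal_RP (n m : nat) (f : 'rV[R]_n.+1 -> 'rV[R]_m) : Prop :=
  forall (p : 'rV[R]_n.+1) (e : nat -> 'rV[R]_n.+1),
    on_sphere p -> tangent_on_family p e n ->
    dotv (mean_curv f p e) (mean_curv f p e) = DeltaHat0 (@K_RP1 n) p e.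

End Defs.

(* An isometric immersion x of RP^n(1) lifts to an antipodally invariant
   isometric immersion of the unit sphere.  For K = 1 each delta(n_1, ..., n_k)
   is at most c(n_1, ..., n_k) (Cauchy-Schwarz), so an ideal immersion has
   |H| <= 1.  By the Gauss equation <h(u,u), h(v,v)> = 1 + |h(u,v)|^2 >= 1 for
   orthonormal u, v, which forces h(e_a, e_a) = H for every orthonormal frame,
   hence |h(v,v)| <= 1 for every unit tangent vector v.  Along a great circle
   gamma the function g t := <x_*(gamma' 0), x (gamma t)> then satisfies
   g' 0 = 1 and |g''| <= 1, so g (- pi/2) < g (pi/2); but
   gamma (- pi/2) = - gamma (pi/2), and antipodal invariance gives equality. *)

From HB Require Import structures.
From mathcomp Require Import all_boot all_order all_algebra.
From mathcomp Require Import all_classical all_reals all_analysis.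
From mathcomp Require Import ring lra zify.
Set Implicit Arguments. Unset Strict Implicit. Unset Printing Implicit Defensive.
Import Order.TTheory GRing.Theory Num.Theory.
Import numFieldNormedType.Exports.
Local Open Scope classical_set_scope.
Local Open Scope ring_scope.

Section DotProduct.
Context {R : realType} {k : nat}.
Implicit Types u v w : 'rV[R]_k.

Lemma dotvC u v : dotv u v = dotv v u.
Proof. by apply: eq_bigr => i _; rewrite mulrC. Qed.

Lemma dotvDl u v w : dotv (u + v) w = dotv u w + dotv v w.
Proof. by rewrite /dotv -big_split; apply: eq_bigr => i _; rewrite mxE mulrDl. Qed.

Lemma dotvDr u v w : dotv w (u + v) = dotv w u + dotv w v.
Proof. by rewrite dotvC dotvDl !(dotvC w). Qed.

Lemma dotvZl (c : R) u v : dotv (c *: u) v = c * dotv u v.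
Proof. by rewrite /dotv mulr_sumr; apply: eq_bigr => i _; rewrite mxE mulrA. Qed.

Lemma dotvZr (c : R) u v : dotv u (c *: v) = c * dotv u v.
Proof. by rewrite dotvC dotvZl dotvC. Qed.

Lemma dotvNl u v : dotv (- u) v = - dotv u v.
Proof. by rewrite -scaleN1r dotvZl mulN1r. Qed.

Lemma dotvNr u v : dotv u (- v) = - dotv u v.
Proof. by rewrite dotvC dotvNl dotvC. Qed.

Lemma dotv_suml (I : Type) (r : seq I) (P : pred I) (x : I -> 'rV[R]_k) w :
  dotv (\sum_(i <- r | P i) x i) w = \sum_(i <- r | P i) dotv (x i) w.
Proof.
elim/big_rec2: _ => [|i y1 y2 _ <-]; last by rewrite dotvDl.
by rewrite /dotv big1 // => j _; rewrite mxE mul0r.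
Qed.

Lemma dotv_sumr (I : Type) (r : seq I) (P : pred I) (x : I -> 'rV[R]_k) w :
  dotv w (\sum_(i <- r | P i) x i) = \sum_(i <- r | P i) dotv w (x i).
Proof. by rewrite dotvC dotv_suml; apply: eq_bigr => i _; rewrite dotvC. Qed.

Lemma dotv_ge0 u : 0 <= dotv u u.
Proof. by apply: sumr_ge0 => i _; rewrite -expr2 sqr_ge0. Qed.

Lemma dotv_eq0 u : dotv u u = 0 -> u = 0.
Proof.
move/eqP; rewrite psumr_eq0 => [/allP uu0|i _]; last by rewrite -expr2 sqr_ge0.
apply/rowP => i; rewrite mxE.
by move: (uu0 i (mem_index_enum _)); rewrite /= -expr2 sqrf_eq0 => /eqP.
Qed.

Lemma dotv_delta_mx (i j : 'I_k) :
  dotv (delta_mx 0 i : 'rV[R]_k) (delta_mx 0 j) = (i == j)%:R.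
Proof.
rewrite /dotv (bigD1 i) //= big1 => [|l li]; last by rewrite !mxE (negbTE li) mul0r.
by rewrite !mxE !eqxx mul1r addr0; case: (i == j).
Qed.

Lemma normr_dotv_le1 u v : dotv u u = 1 -> dotv v v <= 1 -> `|dotv u v| <= 1.
Proof.
move=> uu vv; have := dotv_ge0 (u + v); have := dotv_ge0 (u - v).
rewrite !dotvDl !dotvDr !dotvNl !dotvNr opprK (dotvC v u) uu ler_norml.
by move=> ? ?; apply/andP; split; lra.
Qed.

(* The squared deviations from the mean add up to sum_a |x_a|^2 - n |H|^2,
   which the pairwise bound makes at most n (n - 1) (|H|^2 - 1) <= 0. *)
Lemma eq_mean_of_dotv_ge1 (n : nat) (x : 'I_n -> 'rV[R]_k) (i0 : 'I_n) :
  (2 <= n)%N -> (forall a b, a != b -> 1 <= dotv (x a) (x b)) ->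
  let H := n%:R^-1 *: \sum_(a < n) x a in dotv H H <= 1 -> x i0 = H.
Proof.
move=> n2 x_ge1 H HH1.
set S := \sum_(a < n) x a; set Q := \sum_(a < n) dotv (x a) (x a).
have n0 : n%:R != 0 :> R by rewrite pnatr_eq0 -lt0n (leq_trans _ n2).
have SH : S = n%:R *: H by rewrite /H scalerA mulfV // scale1r.
have dev : \sum_(a < n) dotv (x a - H) (x a - H) = Q - n%:R * dotv H H.
  rewrite (eq_bigr (fun a => dotv (x a) (x a) - 2 * dotv (x a) H + dotv H H)).
    rewrite big_split sumrB /= -mulr_sumr -dotv_suml -/S SH dotvZl.
    by rewrite sumr_const card_ord -mulr_natl /Q; ring.
  move=> a _; rewrite !dotvDl !dotvDr !dotvNl !dotvNr opprK (dotvC H (x a)); ring.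
have SS : Q + n%:R * (n%:R - 1) <= n%:R * n%:R * dotv H H.
  have -> : n%:R * n%:R * dotv H H = dotv S S.
    by rewrite SH [in RHS]dotvZl [in RHS]dotvZr mulrA.
  have -> : n%:R * (n%:R - 1) = \sum_(a < n) (n%:R - 1) :> R.
    by rewrite sumr_const card_ord mulr_natl.
  rewrite /S dotv_suml /Q -big_split /=; apply: ler_sum => a _.
  rewrite dotv_sumr (bigD1 a) //= lerD2l.
  have -> : n%:R - 1 = \sum_(b < n | b != a) (1 : R).
    rewrite sumr_const; have := cardC1 a; rewrite card_ord => ->.
    by rewrite -[in LHS](prednK (leq_trans _ n2)) // -addn1 natrD addrK.
  by apply: ler_sum => b ba; apply: x_ge1; rewrite eq_sym.
have n2R : 2 <= n%:R :> R by rewrite ler_nat.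
have dev_le0 : \sum_(a < n) dotv (x a - H) (x a - H) <= 0.
  have := dotv_ge0 H => H0.
  have : 0 <= n%:R * (n%:R - 1) * (1 - dotv H H) :> R.
    by rewrite !mulr_ge0 //; lra.
  rewrite dev; nra.
have dev0 : dotv (x i0 - H) (x i0 - H) = 0.
  apply/eqP; rewrite eq_le dotv_ge0 andbT (le_trans _ dev_le0) //.
  rewrite (bigD1 i0) //= lerDl; apply: sumr_ge0 => a _; exact: dotv_ge0.
by apply/eqP; rewrite -subr_eq0; apply/eqP/dotv_eq0.
Qed.

End DotProduct.

Section RealCalculus.
Context {R : realType}.
Implicit Types (f g h : R -> R) (t : R).

Lemma is_deriveDf f g t df dg : is_derive t 1 f df -> is_derive t 1 g dg ->
  is_derive t 1 (fun s => f s + g s) (df + dg).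
Proof. by move=> Hf Hg; have := is_deriveD Hf Hg. Qed.

Lemma is_deriveNf f t df : is_derive t 1 f df -> is_derive t 1 (fun s => - f s) (- df).
Proof. by move=> Hf; have := is_deriveN Hf. Qed.

Lemma is_deriveMf f g t df dg : is_derive t 1 f df -> is_derive t 1 g dg ->
  is_derive t 1 (fun s => f s * g s) (f t * dg + g t * df).
Proof. by move=> Hf Hg; have := is_deriveM Hf Hg. Qed.

Lemma is_deriveMlf f (c : R) t df : is_derive t 1 f df ->
  is_derive t 1 (fun s => c * f s) (c * df).
Proof.
move=> Hf; apply: is_derive_eq (is_deriveMf (is_derive_cst c t 1) Hf) _.
by rewrite mulr0 addr0.
Qed.

Lemma is_derive_sumf (n : nat) (h : 'I_n -> R -> R) (dh : 'I_n -> R) t :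
  (forall i, is_derive t 1 (h i) (dh i)) ->
  is_derive t 1 (fun s => \sum_(i < n) h i s) (\sum_(i < n) dh i).
Proof. by move=> H; have := is_derive_sum H; rewrite fct_sumE. Qed.

Lemma is_derive_constant f (c t d : R) : (forall s, f s = c) ->
  is_derive t 1 f d -> d = 0.
Proof.
move=> fc; have -> : f = cst c by apply/funext.
by case=> _ <-; rewrite derive_cst.
Qed.

Lemma ger0_is_derive_le f df (a b : R) : (forall t, is_derive t 1 f (df t)) ->
  a <= b -> (forall c, a <= c <= b -> 0 <= df c) -> f a <= f b.
Proof.
move=> fdf ab df_ge0.
have fcont : {within `[a, b], continuous f}.
  apply: continuous_subspaceT => t.
  by have [/derivable1_diffP/differentiable_continuous] := fdf t.
have [c] := MVT_segment ab (fun x _ => fdf x) fcont.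
rewrite in_itv /= => cab E.
by rewrite -subr_ge0 E mulr_ge0 ?df_ge0 ?subr_ge0.
Qed.

Lemma ler_is_derive_increment f g df dg (a b : R) :
  (forall t, is_derive t 1 f (df t)) -> (forall t, is_derive t 1 g (dg t)) ->
  a <= b -> (forall c, a <= c <= b -> df c <= dg c) -> f b - f a <= g b - g a.
Proof.
move=> fdf gdg ab dfg.
have gBf t : is_derive t 1 (fun s => g s - f s) (dg t - df t).
  exact: is_deriveDf (gdg t) (is_deriveNf (fdf t)).
have : g a - f a <= g b - f b.
  by apply: (ger0_is_derive_le gBf ab) => c /dfg; rewrite subr_ge0.
lra.
Qed.

Lemma is_deriveZlf (W : normedModType R) (k : R -> R) (X : W) t dk :
  is_derive t 1 k dk -> is_derive t 1 (fun s => k s *: X) (dk *: X).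
Proof.
move=> [/derivable1_diffP dk_ <-].
have dkX : differentiable (fun s => k s *: X) t by exact: differentiableZl.
split; first exact: diff_derivable.
by rewrite deriveE // diffZl // -deriveE.
Qed.

(* From |g''| <= 1 and g' 0 = 1 one gets g' t >= 1 - |t|, and integrating
   once more, g a - g 0 and g 0 - g (- a) both exceed a - a^2/2. *)
Lemma lt_of_normr_derive2_le1 (g g' g'' : R -> R) (a : R) :
  (forall t : R, is_derive t 1 g (g' t)) ->
  (forall t : R, is_derive t 1 g' (g'' t)) ->
  (forall t, `|g'' t| <= 1) -> g' 0 = 1 -> 0 < a < 2 -> g (- a) < g a.
Proof.
move=> dg dg' g''1 g'0 /andP[a0 a2].
have [g''_ge g''_le] : (forall t, -1 <= g'' t) /\ (forall t, g'' t <= 1).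
  by split=> t; have := g''1 t; rewrite ler_norml => /andP[].
have did (t : R) : is_derive t 1 (fun s : R => s) 1 := is_derive_id t 1.
have dparab (c t : R) :
    is_derive t 1 (fun s => s + c * (s * s)) (1 + c * (t * 1 + t * 1)).
  exact: is_deriveDf (did t) (is_deriveMlf c (is_deriveMf (did t) (did t))).
have g'_right t : 0 <= t -> 1 - t <= g' t.
  move=> t0; have := ler_is_derive_increment (fun s => is_deriveNf (did s)) dg' t0.
  by move=> /(_ (fun c _ => g''_ge c)); lra.
have g'_left t : t <= 0 -> 1 + t <= g' t.
  move=> t0; have := ler_is_derive_increment dg' did t0.
  by move=> /(_ (fun c _ => g''_le c)); lra.
have g_right : a - a * a / 2 <= g a - g 0.
  have := ler_is_derive_increment (dparab (- 2^-1)) dg (ltW a0).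
  suff /[swap]/[apply] : forall c, 0 <= c <= a -> 1 + - 2^-1 * (c * 1 + c * 1) <= g' c.
    by lra.
  by move=> c /andP[c0 _]; have := g'_right c c0; lra.
have g_left : a - a * a / 2 <= g 0 - g (- a).
  have na0 : - a <= 0 by rewrite oppr_le0 ltW.
  have := ler_is_derive_increment (dparab 2^-1) dg na0.
  suff /[swap]/[apply] : forall c, - a <= c <= 0 -> 1 + 2^-1 * (c * 1 + c * 1) <= g' c.
    by lra.
  by move=> c /andP[_ c0]; have := g'_left c c0; lra.
have : 0 < a * (2 - a) by rewrite mulr_gt0 // subr_gt0.
by lra.
Qed.

End RealCalculus.

Section DirectionalDerivative.
Context {R : realType} {V W : normedModType R}.
Implicit Types (G : V -> W) (a b x y : V).

Lemma derive_dirD G x a b :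
  differentiable G x -> 'D_(a + b) G x = 'D_a G x + 'D_b G x.
Proof. by move=> dG; rewrite !deriveE // linearD. Qed.

Lemma derive_dirZ G x a (c : R) :
  differentiable G x -> 'D_(c *: a) G x = c *: 'D_a G x.
Proof. by move=> dG; rewrite !deriveE // linearZ. Qed.

Lemma derive_dirN G x a : differentiable G x -> 'D_(- a) G x = - 'D_a G x.
Proof. by move=> dG; rewrite !deriveE // linearN. Qed.

Lemma differentiable_remainder_le G x : differentiable G x -> forall eps : R, 0 < eps ->
  \forall h \near (0 : V), `|G (h + x) - G x - 'd G x h| <= eps * `|h|.
Proof.
move=> /diff_locally dG eps eps0.
by apply: filterS ((eqaddoP _ _ _ _).1 dG eps eps0) => h /=; rewrite opprD addrA.
Qed.

Lemma is_derive_line G a y (s : R) : derivable G (s *: a + y) a ->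
  is_derive s 1 (fun r : R => G (r *: a + y)) ('D_a G (s *: a + y)).
Proof.
have quot : (fun h : R => h^-1 *: (((fun r : R => G (r *: a + y)) \o shift s)
    (h *: (1 : R)) - G (s *: a + y)))
  = (fun h : R => h^-1 *: ((G \o shift (s *: a + y)) (h *: a) - G (s *: a + y))).
  by apply/funext => h /=; rewrite [h *: 1]mulr1 scalerDl addrA.
by move=> dG; split; [rewrite /derivable quot | rewrite /derive quot].
Qed.

Lemma continuous_line G a y : (forall z, differentiable G z) ->
  continuous (fun r : R => G (r *: a + y)).
Proof.
move=> dG s; have [/derivable1_diffP/differentiable_continuous //] :=
  is_derive_line (diff_derivable (v := a) (dG (s *: a + y))).
Qed.

End DirectionalDerivative.

Section Schwarz.
Context {R : realType} {V : normedModType R}.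
Implicit Types (G : V -> R) (a b x : V).

Definition second_difference G x a b (h : R) :=
  G (h *: a + (h *: b + x)) - G (h *: a + x) - G (h *: b + x) + G x.

Lemma second_differenceC G x a b h :
  second_difference G x a b h = second_difference G x b a h.
Proof. by rewrite /second_difference addrCA; ring. Qed.

Lemma second_difference_MVT G x a b (h : R) : (forall z, differentiable G z) ->
  0 < h -> exists2 xi, 0 < xi < h & second_difference G x a b h =
    h * ('D_a G (xi *: a + (h *: b + x)) - 'D_a G (xi *: a + x)).
Proof.
move=> dG h0.
pose k s := G (s *: a + (h *: b + x)) - G (s *: a + x).
have dk (s : R) :
    is_derive s 1 k ('D_a G (s *: a + (h *: b + x)) - 'D_a G (s *: a + x)).
  by apply: is_deriveB; apply: is_derive_line; exact: diff_derivable.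
have ck : {within `[0, h], continuous k}.
  by apply: continuous_subspaceT => s; apply: continuousB; exact: continuous_line.
have [xi] := MVT h0 (fun s _ => dk s) ck.
rewrite in_itv /= => xi0h; rewrite subr0 [_ * h]mulrC => kh; exists xi => //.
by rewrite -kh /k /second_difference !scale0r !add0r; ring.
Qed.

Lemma second_difference_approx G a b x : (forall z, differentiable G z) ->
  differentiable ('D_a G) x -> forall eps : R, 0 < eps ->
  exists2 d : R, 0 < d & forall h : R, 0 < h < d ->
  `|second_difference G x a b h - h ^+ 2 * 'D_b ('D_a G) x| <= eps * h ^+ 2.
Proof.
move=> dG dDG eps eps0.
set c := `|a| + `|b| + 1.
have c0 : 0 < c by rewrite /c ltr_pwDr // addr_ge0.
set eps' := eps / (2 * c).
have eps'0 : 0 < eps' by rewrite divr_gt0 // mulr_gt0.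
have /nbhs_norm0P [d0 /= d00 approx] := differentiable_remainder_le dDG eps'0.
exists (d0 / c) => [|h /andP[h0 hd]]; first by rewrite divr_gt0.
have [xi /andP[xi0 xih] ->] := second_difference_MVT x a b dG h0.
set P := 'D_a G; set L := 'd P x.
have hc : h * c < d0 by rewrite -ltr_pdivlMr.
have [na nb] := (normr_ge0 a, normr_ge0 b).
have ny2 : `|xi *: a| <= h * `|a|.
  by rewrite normrZ ger0_norm ?(ltW xi0) // ler_wpM2r // ltW.
have ny1 : `|xi *: a + h *: b| <= h * (`|a| + `|b|).
  by rewrite (le_trans (ler_normD _ _)) // mulrDr lerD // normrZ gtr0_norm.
have abc : `|a| + `|b| <= c by rewrite /c lerDl.
have ac : `|a| <= c by rewrite /c -addrA lerDl addr_ge0.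
have E1 := approx _ (le_lt_trans ny1 (le_lt_trans (ler_wpM2l (ltW h0) abc) hc)).
have E2 := approx _ (le_lt_trans ny2 (le_lt_trans (ler_wpM2l (ltW h0) ac) hc)).
rewrite /= -/P -/L in E1 E2; rewrite (deriveE _ dDG) -/L addrA.
have Lab : L (xi *: a + h *: b) = L (xi *: a) + h * L b.
  by rewrite linearD [L (h *: b)]linearZ.
have -> : h * (P (xi *: a + h *: b + x) - P (xi *: a + x)) - h ^+ 2 * L b =
    h * ((P (xi *: a + h *: b + x) - P x - L (xi *: a + h *: b)) -
         (P (xi *: a + x) - P x - L (xi *: a))).
  by rewrite Lab expr2; ring.
have e12 := le_trans (ler_normB _ _) (lerD (le_trans E1 (ler_wpM2l (ltW eps'0) ny1))
  (le_trans E2 (ler_wpM2l (ltW eps'0) ny2))).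
rewrite normrM gtr0_norm //; apply: le_trans (ler_wpM2l (ltW h0) e12) _.
have -> : eps = eps' * (2 * c) by rewrite /eps' divfK // mulf_neq0 // gt_eqF.
have := mulr_ge0 (ltW (mulr_gt0 eps'0 (mulr_gt0 h0 h0))) (addr_ge0 nb (ler0n R 2)).
rewrite /c expr2; lra.
Qed.

Lemma derive2C G a b x : (forall z, differentiable G z) ->
  differentiable ('D_a G) x -> differentiable ('D_b G) x ->
  'D_b ('D_a G) x = 'D_a ('D_b G) x.
Proof.
move=> dG dDaG dDbG; set L1 := 'D_b ('D_a G) x; set L2 := 'D_a ('D_b G) x.
suff small e : 0 < e -> `|L1 - L2| <= e.
  apply/eqP; rewrite -subr_eq0 -normr_le0 leNgt; apply/negP => L12.
  by have := small _ (divr_gt0 L12 (ltr0n R 2)); lra.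
move=> e0; have e20 : 0 < e / 2 by rewrite divr_gt0.
have [d1 d10 approx1] := second_difference_approx b dG dDaG e20.
have [d2 d20 approx2] := second_difference_approx a dG dDbG e20.
pose h := Num.min d1 d2 / 2.
have hm : 0 < Num.min d1 d2 by rewrite lt_min d10 d20.
have h0 : 0 < h by rewrite divr_gt0.
have hd : h < Num.min d1 d2 by rewrite /h ltr_pdivrMr // ltr_pMr // ltr1n.
have hd1 : h < d1 by apply: lt_le_trans hd _; rewrite ge_min lexx.
have hd2 : h < d2 by apply: lt_le_trans hd _; rewrite ge_min lexx orbT.
have /approx1 A1 : 0 < h < d1 by rewrite h0.
have /approx2 A2 : 0 < h < d2 by rewrite h0.
rewrite second_differenceC in A2.
have h20 : 0 < h ^+ 2 by rewrite exprn_gt0.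
suff : `|h ^+ 2 * (L1 - L2)| <= e * h ^+ 2.
  by rewrite normrM gtr0_norm // mulrC ler_pM2r.
have -> : h ^+ 2 * (L1 - L2) = (second_difference G x a b h - h ^+ 2 * L2) -
    (second_difference G x a b h - h ^+ 2 * L1) by ring.
rewrite (le_trans (ler_normB _ _)) // (le_trans (lerD A2 A1)) //.
by rewrite -mulrDl -splitr.
Qed.

End Schwarz.

Section Smooth.
Context {R : realType} {V : normedModType R}.

Lemma iter_D_rcons (W : normedModType R) (G : V -> W) vs v :
  iter_D vs ('D_v G) = iter_D (rcons vs v) G.
Proof. by elim: vs => //= w vs ->. Qed.

Lemma smooth_derive (W : normedModType R) (G : V -> W) v :
  smooth G -> smooth ('D_v G).
Proof. by move=> sG vs x; rewrite iter_D_rcons; apply: sG. Qed.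

Lemma smooth_differentiable (W : normedModType R) (G : V -> W) x :
  smooth G -> differentiable G x.
Proof. by move=> sG; apply: (sG [::]). Qed.

Lemma derive_coord (m : nat) (F : V -> 'rV[R]_m) i v x :
  differentiable F x -> 'D_v F x 0 i = 'D_v (fun y => F y 0 i) x.
Proof. by move=> dF; rewrite derive_mx ?mxE //; exact: diff_derivable. Qed.

Lemma smooth_coord (m : nat) (F : V -> 'rV[R]_m) i :
  smooth F -> smooth (fun y => F y 0 i).
Proof.
move=> sF vs x.
have -> : iter_D vs (fun y => F y 0 i) = (fun y => iter_D vs F y 0 i).
  elim: vs {x} => //= v vs ->; apply/funext => y.
  by rewrite derive_mx ?mxE //; exact/diff_derivable/sF.
apply: (@differentiable_comp _ _ _ _ (iter_D vs F) (fun M : 'rV[R]_m => M 0 i)).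
  exact: sF.
exact: differentiable_coord.
Qed.

Lemma smooth_derive2C (G : V -> R) a b x : smooth G ->
  'D_b ('D_a G) x = 'D_a ('D_b G) x.
Proof.
move=> sG; apply: derive2C => [z||]; apply: smooth_differentiable => //.
  exact: smooth_derive.
exact: smooth_derive.
Qed.

End Smooth.

Section GreatCircle.
Context {R : realType} {N : nat}.
Local Notation V := 'rV[R]_N.+1.
Implicit Types (p q u v w P Q : V) (t : R).

Lemma geod0 P Q : geod P Q 0 = P.
Proof. by rewrite /geod cos0 sin0 scale1r scale0r addr0. Qed.

Lemma geod_pihalf P Q : geod P Q (pi / 2) = Q.
Proof. by rewrite /geod cos_pihalf sin_pihalf scale0r add0r scale1r. Qed.

Lemma geodNpihalf P Q : geod P Q (- (pi / 2)) = - Q.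
Proof. by rewrite /geod cosN sinN cos_pihalf sin_pihalf scale0r add0r scaleN1r. Qed.

Lemma is_derive_geod P Q t : is_derive t 1 (geod P Q) (geod Q (- P) t).
Proof.
have -> : geod Q (- P) t = (- sin t) *: P + cos t *: Q.
  by rewrite /geod scalerN scaleNr addrC.
by apply: is_deriveD; apply: is_deriveZlf;
  first [exact: is_derive_cos | exact: is_derive_sin].
Qed.

Lemma is_derive_comp_geod (W : normedModType R) (G : V -> W) P Q t :
  differentiable G (geod P Q t) ->
  is_derive t 1 (fun s => G (geod P Q s)) ('D_(geod Q (- P) t) G (geod P Q t)).
Proof.
move=> dG; have [/derivable1_diffP dgeod dgeodE] := is_derive_geod P Q t.
have dGgeod : differentiable (G \o geod P Q) t by apply: differentiable_comp.
split; first exact: diff_derivable.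
by rewrite (deriveE _ dGgeod) diff_comp // /= -(deriveE _ dgeod) dgeodE -deriveE.
Qed.

Lemma derive_geod_dir (G : V -> R) P Q t x : differentiable G x ->
  'D_(geod P Q t) G x = cos t * 'D_P G x + sin t * 'D_Q G x.
Proof. by move=> dG; rewrite derive_dirD // !derive_dirZ. Qed.

Lemma is_derive_derive_geod (G : V -> R) P Q P' Q' t : smooth G ->
  is_derive t 1 (fun s => 'D_(geod P' Q' s) G (geod P Q s))
    ('D_(geod Q' (- P') t) G (geod P Q t) +
     'D_(geod Q (- P) t) ('D_(geod P' Q' t) G) (geod P Q t)).
Proof.
move=> sG.
have dG x : differentiable G x by exact: smooth_differentiable.
have dD X x : differentiable ('D_X G) x.
  by apply: smooth_differentiable; apply: smooth_derive.
have -> : (fun s => 'D_(geod P' Q' s) G (geod P Q s)) =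
    (cos : R -> R) * (fun s => 'D_P' G (geod P Q s)) +
    (sin : R -> R) * (fun s => 'D_Q' G (geod P Q s)).
  by apply/funext => s; rewrite derive_geod_dir.
have -> : 'D_(geod P' Q' t) G = cos t \*: 'D_P' G + sin t \*: 'D_Q' G.
  by apply/funext => x; rewrite derive_geod_dir.
have dP' := is_derive_comp_geod (t := t) (dD P' (geod P Q t)).
have dQ' := is_derive_comp_geod (t := t) (dD Q' (geod P Q t)).
apply: is_derive_eq (is_deriveD (is_deriveM (is_derive_cos t) dP')
  (is_deriveM (is_derive_sin t) dQ')) _.
rewrite deriveD; try by apply: derivableZ; exact: diff_derivable.
rewrite !deriveZ; try exact: diff_derivable.
rewrite (derive_geod_dir Q' (- P') t (dG _)) derive_dirN //.
move: (cos t) (sin t) ('D_P' G _) ('D_Q' G _) ('D_(geod Q (- P) t) ('D_P' G) _)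
  ('D_(geod Q (- P) t) ('D_Q' G) _) => c s dp dq dpp dqp /=.
rewrite /GRing.scale /=; ring.
Qed.

Lemma is_derive_derive_geod0 (G : V -> R) P Q P' Q' : smooth G ->
  is_derive (0 : R) 1 (fun s => 'D_(geod P' Q' s) G (geod P Q s))
    ('D_Q' G P + 'D_Q ('D_P' G) P).
Proof.
move=> sG; apply: is_derive_eq (is_derive_derive_geod P Q P' Q' 0 sG) _.
by rewrite !geod0.
Qed.

Lemma is_derive_comp_geod0 (G : V -> R) P Q : smooth G ->
  is_derive (0 : R) 1 (fun s => G (geod P Q s)) ('D_Q G P).
Proof.
move=> sG; apply: is_derive_eq (is_derive_comp_geod (smooth_differentiable _ sG)) _.
by rewrite !geod0.
Qed.

End GreatCircle.

Section SphereGeodesic.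
Context {R : realType} {N : nat}.
Local Notation V := 'rV[R]_N.+1.
Implicit Types (p u w : V) (t : R).

Lemma on_sphere_geod p u t : on_sphere p -> dotv u u = 1 -> dotv p u = 0 ->
  on_sphere (geod p u t).
Proof.
rewrite /on_sphere /geod => pp uu pu.
rewrite !dotvDl !dotvDr !dotvZl !dotvZr pp uu pu (dotvC u p) pu.
by rewrite !mulr0 !addr0 add0r !mulr1 -!expr2 cos2Dsin2.
Qed.

Lemma tangent_geod p u w t : dotv p w = 0 -> dotv u w = 0 -> tangent (geod p u t) w.
Proof. by rewrite /tangent /geod dotvDl !dotvZl => -> ->; rewrite !mulr0 addr0. Qed.

Lemma dotv_geod_velocity p u t : on_sphere p -> dotv u u = 1 -> dotv p u = 0 ->
  dotv (geod u (- p) t) (geod u (- p) t) = 1.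
Proof.
move=> pp uu pu; apply: on_sphere_geod => //.
  by rewrite dotvNl dotvNr opprK.
by rewrite dotvNr dotvC pu oppr0.
Qed.

Lemma tangent_geod_velocity p u t : on_sphere p -> dotv u u = 1 -> dotv p u = 0 ->
  tangent (geod p u t) (geod u (- p) t).
Proof.
rewrite /on_sphere /tangent /geod => pp uu pu.
rewrite !dotvDl !dotvDr !dotvZl !dotvZr !dotvNr pp uu pu (dotvC u p) pu.
by rewrite !oppr0 !mulr0 !mulr1; ring.
Qed.

Lemma dotv_geod_velocity_orth p u w t : dotv p w = 0 -> dotv u w = 0 ->
  dotv (geod u (- p) t) w = 0.
Proof. by move=> pw uw; apply: tangent_geod; rewrite ?dotvNl ?pw ?oppr0. Qed.

End SphereGeodesic.

(* The second derivative at 0 of G along the great circle t |-> cos t p + sin t w;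
   for the coordinates of an immersion it is the coordinate of h(w, w). *)
Definition derive2_geod {R : realType} {N : nat} (G : 'rV[R]_N.+1 -> R)
  (p w : 'rV[R]_N.+1) : R := - 'D_p G p + 'D_w ('D_w G) p.

Section Gauss.
Context {R : realType} {N m : nat}.
Local Notation V := 'rV[R]_N.+1.
Implicit Types (p q u v w : V).
Variable F : 'I_m -> V -> R.
Hypothesis sF : forall i, smooth (F i).
Hypothesis iso : forall p a b, on_sphere p -> tangent p a -> tangent p b ->
  \sum_(i < m) 'D_a (F i) p * 'D_b (F i) p = dotv a b.

Let dF i x : differentiable (F i) x := smooth_differentiable x (sF i).
Let sD i v : smooth ('D_v (F i)) := smooth_derive v (sF i).

Lemma isometry_derive_sqr p u w : on_sphere p -> dotv u u = 1 -> dotv p u = 0 ->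
  dotv p w = 0 -> dotv u w = 0 ->
  \sum_(i < m) 'D_w (F i) p * 'D_u ('D_w (F i)) p = 0.
Proof.
move=> pp uu pu pw uw.
have const s : \sum_(i < m) 'D_w (F i) (geod p u s) * 'D_w (F i) (geod p u s) = dotv w w.
  by apply: iso; [exact: on_sphere_geod | exact: tangent_geod | exact: tangent_geod].
have dsqr i : is_derive (0 : R) 1
    (fun s => 'D_w (F i) (geod p u s) * 'D_w (F i) (geod p u s))
    ('D_w (F i) p * 'D_u ('D_w (F i)) p + 'D_w (F i) p * 'D_u ('D_w (F i)) p).
  have dDw := is_derive_comp_geod0 p u (sD i w).
  by have := is_deriveMf dDw dDw; rewrite geod0.
have := is_derive_constant const (is_derive_sumf dsqr).
by rewrite big_split /= => /eqP; rewrite -mulr2n mulrn_eq0 => /eqP.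
Qed.

Lemma isometry_derive_orth p u w : on_sphere p -> dotv u u = 1 -> dotv p u = 0 ->
  dotv p w = 0 -> dotv u w = 0 ->
  \sum_(i < m) (derive2_geod (F i) p u * 'D_w (F i) p +
                'D_u (F i) p * 'D_w ('D_u (F i)) p) = 0.
Proof.
move=> pp uu pu pw uw.
have const s : \sum_(i < m) 'D_(geod u (- p) s) (F i) (geod p u s) *
    'D_w (F i) (geod p u s) = 0.
  rewrite iso; first exact: dotv_geod_velocity_orth.
  - exact: on_sphere_geod.
  - exact: tangent_geod_velocity.
  - exact: tangent_geod.
have dprod i : is_derive (0 : R) 1
    (fun s => 'D_(geod u (- p) s) (F i) (geod p u s) * 'D_w (F i) (geod p u s))
    ('D_u (F i) p * 'D_u ('D_w (F i)) p +
     'D_w (F i) p * ('D_(- p) (F i) p + 'D_u ('D_u (F i)) p)).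
  have := is_deriveMf (is_derive_derive_geod0 p u u (- p) (sF i))
                      (is_derive_comp_geod0 p u (sD i w)).
  by rewrite !geod0.
rewrite -[RHS](is_derive_constant const (is_derive_sumf dprod)).
apply: eq_bigr => i _.
by rewrite derive_dirN // (smooth_derive2C _ _ _ (sF i)) [RHS]addrC [in RHS]mulrC.
Qed.

(* The second fundamental form is normal to the immersion. *)
Lemma derive2_geod_normal p u w : on_sphere p -> dotv u u = 1 -> dotv w w = 1 ->
  dotv p u = 0 -> dotv p w = 0 -> dotv u w = 0 ->
  \sum_(i < m) derive2_geod (F i) p u * 'D_w (F i) p = 0.
Proof.
move=> pp uu ww pu pw uw.
have := isometry_derive_orth pp uu pu pw uw.
rewrite big_split /= (isometry_derive_sqr pp ww pw pu) ?addr0 //.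
by rewrite dotvC.
Qed.

Lemma derive_normal_along_geod q u v : on_sphere q -> dotv u u = 1 -> dotv v v = 1 ->
  dotv q u = 0 -> dotv q v = 0 -> dotv u v = 0 ->
  \sum_(i < m) (derive2_geod (F i) q u * derive2_geod (F i) q v +
     'D_v (F i) q * (- ('D_v (F i) q + 'D_v ('D_q (F i)) q) +
                     'D_v ('D_u ('D_u (F i))) q)) = 0.
Proof.
move=> qq uu vv qu qv uv.
have normal s : \sum_(i < m) derive2_geod (F i) (geod q v s) u *
    'D_(geod v (- q) s) (F i) (geod q v s) = 0.
  apply: derive2_geod_normal => //.
  - exact: on_sphere_geod.
  - exact: dotv_geod_velocity.
  - by apply: tangent_geod; rewrite // dotvC.
  - exact: tangent_geod_velocity.
  - by rewrite dotvC; apply: dotv_geod_velocity_orth; rewrite // dotvC.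
apply: (is_derive_constant (t := 0) normal); apply: is_derive_sumf => i.
have := is_deriveMf
  (is_deriveDf (is_deriveNf (is_derive_derive_geod0 q v q v (sF i)))
               (is_derive_comp_geod0 q v (smooth_derive u (sD i u))))
  (is_derive_derive_geod0 q v v (- q) (sF i)).
by rewrite !geod0 derive_dirN // addrC.
Qed.

Lemma derive_sqr_along_geod q u v : on_sphere q -> dotv u u = 1 -> dotv v v = 1 ->
  dotv q u = 0 -> dotv q v = 0 -> dotv u v = 0 ->
  \sum_(i < m) ('D_v (F i) q * (- 'D_q ('D_v (F i)) q + 'D_u ('D_u ('D_v (F i))) q) +
     'D_u ('D_v (F i)) q * 'D_u ('D_v (F i)) q) = 0.
Proof.
move=> qq uu vv qu qv uv.
have sqr s : \sum_(i < m) 'D_v (F i) (geod q u s) *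
    'D_(geod u (- q) s) ('D_v (F i)) (geod q u s) = 0.
  apply: isometry_derive_sqr.
  - exact: on_sphere_geod.
  - exact: dotv_geod_velocity.
  - exact: tangent_geod_velocity.
  - exact: tangent_geod.
  - exact: dotv_geod_velocity_orth.
apply: (is_derive_constant (t := 0) sqr); apply: is_derive_sumf => i.
have := is_deriveMf (is_derive_comp_geod0 q u (sD i v))
  (is_derive_derive_geod0 q u u (- q) (sD i v)).
by rewrite !geod0 (derive_dirN _ (smooth_differentiable q (sD i v))).
Qed.

Lemma gauss_equation q u v : on_sphere q -> dotv u u = 1 -> dotv v v = 1 ->
  dotv q u = 0 -> dotv q v = 0 -> dotv u v = 0 ->
  \sum_(i < m) derive2_geod (F i) q u * derive2_geod (F i) q v =
  1 + \sum_(i < m) 'D_v ('D_u (F i)) q ^+ 2.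
Proof.
move=> qq uu vv qu qv uv.
have G := congr2 (fun a b => a - b) (derive_normal_along_geod qq uu vv qu qv uv)
  (derive_sqr_along_geod qq uu vv qu qv uv).
rewrite subr0 -sumrB in G.
have one := iso qq qv qv; rewrite vv in one.
rewrite -one; apply/eqP; rewrite -subr_eq0 -big_split -sumrB /=.
rewrite -[X in _ == X]G; apply/eqP; apply: eq_bigr => i _.
have e1 : 'D_q ('D_v (F i)) q = 'D_v ('D_q (F i)) q := smooth_derive2C v q q (sF i).
have e2 : 'D_u ('D_v (F i)) q = 'D_v ('D_u (F i)) q := smooth_derive2C v u q (sF i).
have e3 : 'D_u ('D_u ('D_v (F i))) q = 'D_v ('D_u ('D_u (F i))) q :=
  etrans (congr1 (fun G => 'D_u G q) (funext (fun x => smooth_derive2C v u x (sF i))))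
         (esym (smooth_derive2C u v q (sD i u))).
have alg (A B a b b' c c' d d' : R) : c' = c -> d' = d -> b' = b ->
    A * B - (a * a + b ^+ 2) = A * B + a * (- (a + c) + d) - (a * (- c' + d') + b' * b').
  by move=> -> -> ->; rewrite expr2; ring.
exact: alg e1 e3 e2.
Qed.

End Gauss.

Lemma bin2_double n : (2 * 'C(n, 2) + n = n * n)%N.
Proof. by rewrite -(mul_bin_diag n 1) bin1; case: n => //= n; rewrite mulnS addnC. Qed.

Lemma sqr_addn_le (x a b c : nat) :
  (a * a <= b * c -> (x + a) * (x + a) <= (b + 1) * (x * x + c))%N.
Proof.
move=> abc.
have bxa : (2 * x * a * b <= b * b * x * x + a * a)%N.
  by have : (0 <= (b * x - a) * (b * x - a))%N by []; nia.
have xa : (2 * x * a <= b * x * x + c)%N.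
  have [b0|b_gt0] := posnP b.
    by move: abc; rewrite b0 mul0n leqn0 muln_eq0 orbb => /eqP ->; rewrite !muln0.
  by rewrite -(leq_pmul2l b_gt0); nia.
nia.
Qed.

(* Cauchy-Schwarz for the entries of s together with r further entries 1. *)
Lemma sumn_sqr_ge (s : seq nat) (r : nat) :
  ((sumn s + r) * (sumn s + r) <= (size s + r) * (sumn [seq x * x | x <- s] + r))%N.
Proof.
elim: s => [|x s IH] //=.
by have := sqr_addn_le x IH; rewrite !addnA addn1 addSn.
Qed.

Lemma sumn_bin2_double (s : seq nat) :
  (2 * sumn [seq 'C(x, 2) | x <- s] + sumn s = sumn [seq x * x | x <- s])%N.
Proof. by elim: s => //= x s IH; have := bin2_double x; nia. Qed.

Section ConstantCurvature.
Context {R : realType}.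

(* For K = 1 the numerator of delta / c is C(n,2) - sum_j C(n_j,2); its
   bound by c is the Cauchy-Schwarz inequality of [sumn_sqr_ge].  With
   r := n - sum_j n_j, c vanishes when k + r = 1, and then x / 0 = 0. *)
Lemma delta_ratio_le1 n s : (2 <= n)%N -> S_adm n s ->
  ('C(n, 2)%:R - (sumn [seq 'C(x, 2) | x <- s])%:R) / c_const R n s <= 1.
Proof.
move=> n2 /and3P[k0 _ Sle].
set k := size s; set S := sumn s; set Q := sumn [seq x * x | x <- s].
set r := (n - S)%N; have nSr : (S + r = n)%N by rewrite subnKC.
have cs : n%:R * n%:R <= (k%:R + r%:R) * (Q%:R + r%:R) :> R.
  by rewrite -!natrD -!natrM ler_nat -{1 2}nSr sumn_sqr_ge.
have bn := congr1 (fun x : nat => x%:R : R) (bin2_double n).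
have bs := congr1 (fun x : nat => x%:R : R) (sumn_bin2_double s).
rewrite /= !natrD !natrM -/S -/Q in bn bs.
have nR : n%:R = S%:R + r%:R :> R by rewrite -natrD nSr.
have kr : (n + k)%:R - S%:R = k%:R + r%:R :> R by rewrite natrD nR; ring.
have kr_1 : (n + k)%:R - 1 - S%:R = k%:R + r%:R - 1 :> R by rewrite -kr; ring.
rewrite /c_const -/k -/S kr_1 kr.
have [kr1|kr1] := eqVneq (k + r)%N 1%N.
  have -> : k%:R + r%:R = 1 :> R by rewrite -natrD kr1.
  by rewrite subrr mulr0 mul0r invr0 mulr0 ler01.
have kr2 : 2 <= k%:R + r%:R :> R.
  by rewrite -natrD ler_nat; move: k0 kr1; rewrite -/k; lia.
have n_gt0 : 0 < n%:R :> R by rewrite ltr0n; exact: ltnW.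
have c_gt0 : 0 < n%:R ^+ 2 * (k%:R + r%:R - 1) / (2 * (k%:R + r%:R)) :> R.
  by rewrite divr_gt0 ?mulr_gt0 ?exprn_gt0 //; lra.
rewrite ler_pdivrMr // mul1r ler_pdivlMr; last by lra.
rewrite expr2; nra.
Qed.

Lemma tau_seg_K1 N (e : nat -> 'rV[R]_N.+1) lo k :
  tau_seg (@K_RP1 R N) e lo (lo + k) = 'C(k, 2)%:R.
Proof.
rewrite /tau_seg /K_RP1; under eq_bigr do rewrite sumr_const_nat.
rewrite -{1}(add0n lo) big_addn addKn -bin2_sum natr_sum big_nat_rev /=.
by apply: eq_big_nat => a /andP[_ ak]; congr _%:R; lia.
Qed.

Lemma tau_blocks_K1 N (e : nat -> 'rV[R]_N.+1) lo s :
  tau_blocks (@K_RP1 R N) e lo s = (sumn [seq 'C(x, 2) | x <- s])%:R.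
Proof. by elim: s lo => //= x s IH lo; rewrite tau_seg_K1 IH natrD. Qed.

End ConstantCurvature.

Lemma DeltaHat0_K1_le1 {R : realType} N (p : 'rV[R]_N.+1) (e : nat -> 'rV[R]_N.+1) :
  (2 <= N)%N -> tangent_on_family p e N -> DeltaHat0 (@K_RP1 R N) p e <= 1.
Proof.
move=> N2 [e_tan e_on]; rewrite /DeltaHat0.
set A := [set t | exists s, S_adm N s /\ _].
have [A0|/set0P A0] := eqVneq A set0; first by rewrite A0 sup0 ler01.
apply: ge_sup => // _ [s [adm ->]].
have Sle : (sumn s <= N)%N by case/and3P: adm.
rewrite /delta_inv (_ : [set t | _] = [set (sumn [seq 'C(x, 2) | x <- s])%:R]).
  by have := tau_seg_K1 e 0 N; rewrite add0n inf1 => ->; exact: delta_ratio_le1.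
apply/seteqP; split => x /=; first by move=> [E [_ ->]]; rewrite tau_blocks_K1.
move=> ->; exists e; split; last by rewrite tau_blocks_K1.
by split=> [a aS | a b aS bS]; [apply: e_tan | apply: e_on]; exact: leq_trans Sle.
Qed.

Section IsometricImmersion.
Context {R : realType} {n m : nat}.
Local Notation V := 'rV[R]_n.+1.
Implicit Types (p q u v w : V) (t : R).
Variable f : V -> 'rV[R]_m.
Hypothesis sf : smooth f.
Hypothesis iso : forall p u v, on_sphere p -> tangent p u -> tangent p v ->
  dotv ('D_u f p) ('D_v f p) = dotv u v.

Let df x : differentiable f x := smooth_differentiable x sf.
Let sfc i : smooth (fun y => f y 0 i) := smooth_coord i sf.

Lemma isometry_coord p a b : on_sphere p -> tangent p a -> tangent p b ->
  \sum_(i < m) 'D_a (fun y => f y 0 i) p * 'D_b (fun y => f y 0 i) p = dotv a b.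
Proof.
move=> pS pa pb; rewrite -(iso pS pa pb); apply: eq_bigr => i _.
by rewrite !derive_coord.
Qed.

Lemma is_derive_comp_geod_coord p v t i :
  is_derive t 1 (fun s => f (geod p v s) 0 i)
    ('D_(geod v (- p) t) f (geod p v t) 0 i).
Proof.
by rewrite derive_coord //; exact: (is_derive_comp_geod (smooth_differentiable _ (sfc i))).
Qed.

Lemma is_derive_derive_geod_coord p v t i :
  is_derive t 1 (fun s => 'D_(geod v (- p) s) f (geod p v s) 0 i)
    (derive2_geod (fun y => f y 0 i) (geod p v t) (geod v (- p) t)).
Proof.
have -> : (fun s => 'D_(geod v (- p) s) f (geod p v s) 0 i) =
    (fun s => 'D_(geod v (- p) s) (fun y => f y 0 i) (geod p v s)).
  by apply/funext => s; rewrite derive_coord.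
apply: is_derive_eq (is_derive_derive_geod p v v (- p) t (sfc i)) _.
have -> : geod (- p) (- v) t = - geod p v t by rewrite /geod !scalerN opprD.
by rewrite (derive_dirN _ (smooth_differentiable _ (sfc i))).
Qed.

Lemma sff_diag_coord p w i :
  sff_diag f p w 0 i = derive2_geod (fun y => f y 0 i) p w.
Proof.
have Df : 'D_1 (f \o geod p w) = fun s => 'D_(geod w (- p) s) f (geod p w s).
  by apply/funext => s; exact: (@derive_val _ _ _ _ _ _ _ (is_derive_comp_geod (df _))).
have Dfi j := is_derive_derive_geod_coord p w 0 j.
rewrite /sff_diag Df derive_mx ?mxE; last first.
  by apply/derivable_mxP => a j; rewrite (ord1 a); case: (Dfi j).
by rewrite (@derive_val _ _ _ _ _ _ _ (Dfi i)) !geod0.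
Qed.

Lemma one_le_dotv_sff_diag q u v : on_sphere q -> dotv u u = 1 -> dotv v v = 1 ->
  dotv q u = 0 -> dotv q v = 0 -> dotv u v = 0 ->
  1 <= dotv (sff_diag f q u) (sff_diag f q v).
Proof.
move=> qq uu vv qu qv uv.
have -> : dotv (sff_diag f q u) (sff_diag f q v) = \sum_(i < m)
    derive2_geod (fun y => f y 0 i) q u * derive2_geod (fun y => f y 0 i) q v.
  rewrite /dotv; apply: eq_bigr => i _.
  exact: (congr2 (fun a b => a * b) (sff_diag_coord q u i) (sff_diag_coord q v i)).
rewrite (gauss_equation sfc isometry_coord qq uu vv qu qv uv) lerDl.
by apply: sumr_ge0 => i _; exact: sqr_ge0.
Qed.

(* By the Gauss equation the values h(e_a, e_a) of the second fundamental
   form pairwise have inner product at least 1, so once |H| <= 1 they all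
   equal their mean H. *)
Lemma sff_diag_eq_mean_curv p (e : nat -> V) : (2 <= n)%N -> on_sphere p ->
  tangent_on_family p e n -> dotv (mean_curv f p e) (mean_curv f p e) <= 1 ->
  sff_diag f p (e 0%N) = mean_curv f p e.
Proof.
move=> n2 pS [e_tan e_on]; rewrite /mean_curv big_mkord => H1.
have n0 : (0 < n)%N by exact: ltnW.
apply: (eq_mean_of_dotv_ge1 (x := fun a : 'I_n => sff_diag f p (e a)) (Ordinal n0) n2)
  => // a b ab.
have ab' : (nat_of_ord a == nat_of_ord b) = false by apply/negbTE.
by apply: one_le_dotv_sff_diag; rewrite ?e_on ?eqxx ?e_tan ?ab'.
Qed.

Lemma is_derive_dotv_comp_geod (u : 'rV[R]_m) p v t :
  is_derive t 1 (fun s => dotv u (f (geod p v s)))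
    (dotv u ('D_(geod v (- p) t) f (geod p v t))).
Proof.
apply: is_derive_sumf => i.
exact: is_deriveMlf (is_derive_comp_geod_coord p v t i).
Qed.

Lemma is_derive_dotv_derive_geod (u : 'rV[R]_m) p v t :
  is_derive t 1 (fun s => dotv u ('D_(geod v (- p) s) f (geod p v s)))
    (dotv u (sff_diag f (geod p v t) (geod v (- p) t))).
Proof.
apply: is_derive_eq (is_derive_sumf (fun i =>
  is_deriveMlf (u 0 i) (is_derive_derive_geod_coord p v t i))) _.
by apply: eq_bigr => i _; rewrite sff_diag_coord.
Qed.

End IsometricImmersion.

Lemma dotv_delta_inord {R : realType} n a b : (a <= n)%N -> (b <= n)%N ->
  dotv (delta_mx 0 (inord a) : 'rV[R]_n.+1) (delta_mx 0 (inord b)) = (a == b)%:R.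
Proof.
move=> an bn; rewrite dotv_delta_mx; congr (nat_of_bool _)%:R.
apply/eqP/eqP => [ab|->] //.
by have := congr1 val ab; rewrite /= !inordK.
Qed.

Lemma great_circle_frame {R : realType} n (t : R) : (1 <= n)%N ->
  let E a : 'rV[R]_n.+1 := delta_mx 0 (inord a) in
  tangent_on_family (geod (E 0%N) (E 1%N) t)
    (fun a => if a == 0%N then geod (E 1%N) (- E 0%N) t else E a.+1) n.
Proof.
move=> n1 E.
have EE a b : (a <= n)%N -> (b <= n)%N -> dotv (E a) (E b) = (a == b)%:R.
  exact: dotv_delta_inord.
have E00 : on_sphere (E 0%N) by rewrite /on_sphere EE.
split=> [a an | a b an bn]; case: ifP => [/eqP a0|/negbT a0].
- by apply: tangent_geod_velocity; rewrite ?EE.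
- by apply: tangent_geod; rewrite EE // eqSS eq_sym (negbTE a0).
- case: ifP => [/eqP b0|/negbT b0].
    by rewrite a0 b0 eqxx; apply: dotv_geod_velocity; rewrite ?EE.
  rewrite a0 eq_sym (negbTE b0) dotv_geod_velocity_orth // EE //.
  by rewrite eqSS eq_sym (negbTE b0).
- case: ifP => [/eqP b0|_]; last by rewrite EE ?eqSS.
  rewrite b0 (negbTE a0) dotvC dotv_geod_velocity_orth // EE //.
  by rewrite eqSS eq_sym (negbTE a0).
Qed.

Theorem mainTheorem3 (R : realType) (n m : nat) :
  (2 <= n)%N ->
  ~ exists f : 'rV[R]_n.+1 -> 'rV[R]_m,
      isometric_immersion_RP f /\ ideal_RP f.
Proof.
move=> n2 [f [[sf [anti iso]] ideal]].
have n1 : (1 <= n)%N := ltnW n2.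
pose E a : 'rV[R]_n.+1 := delta_mx 0 (inord a).
have E0S : on_sphere (E 0%N) by rewrite /on_sphere dotv_delta_inord.
have E1S : on_sphere (E 1%N) by rewrite /on_sphere dotv_delta_inord.
have E01 : dotv (E 0%N) (E 1%N) = 0 by rewrite dotv_delta_inord.
pose u := 'D_(E 1%N) f (E 0%N).
have uu : dotv u u = 1 by rewrite iso.
have h_le1 t : `|dotv u (sff_diag f (geod (E 0%N) (E 1%N) t) (geod (E 1%N) (- E 0%N) t))| <= 1.
  apply: normr_dotv_le1 uu _.
  have frame := great_circle_frame t n1; rewrite /= in frame.
  have gS : on_sphere (geod (E 0%N) (E 1%N) t) by exact: on_sphere_geod.
  have H1 := DeltaHat0_K1_le1 n2 frame; rewrite -ideal // in H1.
  have := sff_diag_eq_mean_curv sf iso n2 gS frame H1; rewrite /= => ->; exact: H1.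
have g'0 : dotv u ('D_(geod (E 1%N) (- E 0%N) 0) f (geod (E 0%N) (E 1%N) 0)) = 1.
  by rewrite !geod0.
have := lt_of_normr_derive2_le1 (is_derive_dotv_comp_geod sf u (E 0%N) (E 1%N))
  (is_derive_dotv_derive_geod sf u (E 0%N) (E 1%N)) h_le1 g'0.
move=> /(_ (pi / 2)); rewrite divr_gt0 ?pi_gt0 // pihalf_lt2 /=.
by rewrite geodNpihalf geod_pihalf anti // ltxx => /(_ isT).
Qed.
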